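(* Let $K$ and $L$ be $n$-element finite sets, $M=K\times L$, and let $u=(u_{kl})$ be a unitary matrix indexed by $K\times L$ all of whose entries are nonzero. Let $G$ be a symmetry group of $u$ and $R$ the associated representation of $G$ on $F(M)$ (as defined in the context). Then the Berezin transform $I_u$ commutes with $R$: $I_uR_g=R_gI_u$ for all $g\in G$.
   Context: For a finite set $J$, $F(J)$ denotes the space of complex-valued functions on $J$, with standard Hermitian product. For $f=(f_{kl})\in F(M)$, $C_uf$ and $D_uf$ are the operators on $F(K)$ with matrices $x_{kk'}=\sum_{l\in L}u_{kl}f_{kl}\bar u_{k'l}$ and $y_{kk'}=\sum_{l\in L}u_{kl}f_{k'l}\bar u_{k'l}$ respectively; these maps are linear bijections $F(M)\to\operatorname{End}F(K)$, and the Berezin transform is $I_u=C_u^{-1}D_u$, explicitly $(I_uf)_{kl}=\sum_{k',l'}\frac{u_{kl'}u_{k'l}}{u_{kl}u_{k'l'}}f_{k'l'}|u_{k'l'}|^2$. Let $\mathcal U:F(L)\to F(K)$ be $(\mathcal U\psi)_k=\sum_{l}u_{kl}\psi_l$. A group $G$ is called a symmetry group of $u$ if $G$ acts on the left on the sets $K$ and $L$, and there are faithful unitary representations $S$ on $F(K)$ and $T$ on $F(L)$ of the form $(S_g\varphi)_k=a_k(g)\varphi_{g^{-1}k}$, $(T_g\psi)_l=b_l(g)\psi_{g^{-1}l}$, where $|a_k(g)|=|b_l(g)|=1$, such that $S_g\mathcal U=\mathcal U T_g$ for all $g\in G$. The representation $R$ of $G$ on $F(M)$ is $(R_gf)_{kl}=f_{g^{-1}k\,g^{-1}l}$.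 *)

From mathcomp Require Import all_boot all_order all_algebra.
Set Implicit Arguments. Unset Strict Implicit. Unset Printing Implicit Defensive.
Import Order.TTheory GRing.Theory Num.Theory.
Local Open Scope ring_scope.

(* Scalars: C is an arbitrary numeric algebraically closed field with
   conjugation (the complex numbers are the intended instance).
   F(J) is modelled as the function type J -> C. *)

Definition unitary_mat (C : numClosedFieldType) (K L : finType)
  (u : K -> L -> C) : Prop :=
  (forall k k' : K, \sum_(l : L) u k l * (u k' l)^* = (k == k')%:R) /\
  (forall l l' : L, \sum_(k : K) (u k l)^* * u k l' = (l == l')%:R).

Definition Uop (C : numClosedFieldType) (K L : finType) (u : K -> L -> C)
  (psi : L -> C) : K -> C := fun k => \sum_(l : L) u k l * psi l.

Definition berezin (C : numClosedFieldType) (K L : finType) (u : K -> L -> C)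
  (f : K -> L -> C) : K -> L -> C :=
  fun k l => \sum_(k' : K) \sum_(l' : L)
     (u k l' * u k' l) / (u k l * u k' l') * f k' l' * `|u k' l'| ^+ 2.

Definition group_axioms (G : Type) (mul : G -> G -> G) (one : G) (inv : G -> G)
  : Prop :=
  (forall x y z, mul x (mul y z) = mul (mul x y) z) /\
  (forall x, mul one x = x) /\
  (forall x, mul (inv x) x = one).

Definition left_action (G X : Type) (mul : G -> G -> G) (one : G)
  (act : G -> X -> X) : Prop :=
  (forall x, act one x = x) /\
  (forall g h x, act (mul g h) x = act g (act h x)).

Definition monop (C : numClosedFieldType) (G : Type) (X : Type) (inv : G -> G)
  (act : G -> X -> X) (a : X -> G -> C) (g : G) (phi : X -> C) : X -> C :=
  fun x => a x g * phi (act (inv g) x).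

Definition faithful_unitary_monrep (C : numClosedFieldType) (G X : Type)
  (mul : G -> G -> G) (one : G) (inv : G -> G)
  (act : G -> X -> X) (a : X -> G -> C) : Prop :=
  (forall x g, `|a x g| = 1) /\
  (forall phi, monop inv act a one phi = phi) /\
  (forall g h phi, monop inv act a (mul g h) phi
                   = monop inv act a g (monop inv act a h phi)) /\
  (forall g h, (forall phi, monop inv act a g phi = monop inv act a h phi) ->
               g = h).

Definition symmetry_group (C : numClosedFieldType) (K L : finType)
  (u : K -> L -> C) (G : Type) (mul : G -> G -> G) (one : G) (inv : G -> G)
  (actK : G -> K -> K) (actL : G -> L -> L)
  (a : K -> G -> C) (b : L -> G -> C) : Prop :=
  group_axioms mul one inv /\
  left_action mul one actK /\ left_action mul one actL /\
  faithful_unitary_monrep mul one inv actK a /\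
  faithful_unitary_monrep mul one inv actL b /\
  (forall g psi, monop inv actK a g (Uop u psi) = Uop u (monop inv actL b g psi)).

Definition Rop (C : numClosedFieldType) (G : Type) (K L : Type) (inv : G -> G)
  (actK : G -> K -> K) (actL : G -> L -> L) (g : G) (f : K -> L -> C)
  : K -> L -> C :=
  fun k l => f (actK (inv g) k) (actL (inv g) l).

(* Testing the intertwining relation S_g U = U T_g on the basis vectors of
   F(L) shows that relabelling the rows and columns of u by g only multiplies
   it by unimodular row and column phases:
   u_{gk,gl} = a_{gk}(g) u_{kl} / b_{gl}(g).  Such phases cancel in the cross
   ratio u_{kl'} u_{k'l} / (u_{kl} u_{k'l'}) and in |u_{k'l'}|^2, so the
   Berezin transform of u equals that of the relabelled matrix, and the
   Berezin transform is natural with respect to simultaneous relabelling of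
   the matrix and of the function. *)

From mathcomp Require Import all_boot all_order all_algebra.
From mathcomp Require Import ring.
From Stdlib Require Import FunctionalExtensionality.
Set Implicit Arguments. Unset Strict Implicit. Unset Printing Implicit Defensive.
Import Order.TTheory GRing.Theory Num.Theory.
Local Open Scope ring_scope.

Section GroupAction.

Variables (G X : Type) (mul : G -> G -> G) (one : G) (inv : G -> G).
Variable act : G -> X -> X.
Hypothesis Hgroup : group_axioms mul one inv.
Hypothesis Hact : left_action mul one act.

Lemma group_mulV (x : G) : mul x (inv x) = one.
Proof.
case: Hgroup => mulA [mul1g mulVg].
by rewrite -[LHS]mul1g -{1}(mulVg (inv x)) -mulA (mulA (inv x)) mulVg mul1g.
Qed.

Lemma action_invK (g : G) : cancel (act g) (act (inv g)).
Proof. by case: Hgroup Hact => _ [_ mulVg] [act1 actM] x; rewrite -actM mulVg act1. Qed.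

Lemma action_Kinv (g : G) : cancel (act (inv g)) (act g).
Proof. by case: Hact => act1 actM x; rewrite -actM group_mulV act1. Qed.

End GroupAction.

Lemma sum_mul_indicator (R : pzSemiRingType) (T : finType) (F : T -> R) (j : T) :
  \sum_(i : T) F i * (i == j)%:R = F j.
Proof. by rewrite (bigD1 j) //= eqxx mulr1 big1 ?addr0 // => i /negbTE->; rewrite mulr0. Qed.

Section Symmetry.

Variables (C : numClosedFieldType) (K L : finType) (u : K -> L -> C).
Variables (G : Type) (mul : G -> G -> G) (one : G) (inv : G -> G).
Variables (actK : G -> K -> K) (actL : G -> L -> L).
Variables (a : K -> G -> C) (b : L -> G -> C).
Hypothesis Hsym : symmetry_group u mul one inv actK actL a b.

Lemma symmetry_entry_covariance (h : G) (k : K) (l : L) :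
  u (actK h k) (actL h l) * b (actL h l) h = a (actK h k) h * u k l.
Proof.
case: Hsym => Hgroup [HactK [HactL [_ [_ Hinter]]]].
have := congr1 (fun phi => phi (actK h k)) (Hinter h (fun l' => (l' == l)%:R)).
rewrite /monop /Uop /= (action_invK Hgroup HactK) sum_mul_indicator => ->.
under eq_bigr => l' _ do
  rewrite (can2_eq (action_Kinv Hgroup HactL h) (action_invK Hgroup HactL h)) mulrA.
by rewrite sum_mul_indicator.
Qed.

Lemma symmetry_entry_phases (h : G) (k : K) (l : L) :
  u (actK h k) (actL h l) = a (actK h k) h * u k l * (b (actL h l) h)^-1.
Proof.
case: Hsym => _ [_ [_ [_ [[Hb _] _]]]].
have b_neq0 : b (actL h l) h != 0 by rewrite -normr_eq0 Hb oner_eq0.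
by rewrite -symmetry_entry_covariance mulfK.
Qed.

End Symmetry.

Section Berezin.

Variables (C : numClosedFieldType) (K L : finType) (u : K -> L -> C).

Lemma berezin_phase_invariant (v : K -> L -> C) (alpha : K -> C) (beta : L -> C) :
  (forall k, `|alpha k| = 1) -> (forall l, `|beta l| = 1) ->
  (forall k l, v k l = alpha k * u k l * beta l) ->
  forall f, berezin v f =2 berezin u f.
Proof.
move=> Halpha Hbeta Hv f k l; apply: eq_bigr => k' _; apply: eq_bigr => l' _.
set phase := alpha k * alpha k' * beta l * beta l'.
have phase_neq0 : phase != 0.
  by rewrite -normr_eq0 !normrM !Halpha !Hbeta !mulr1 oner_eq0.
rewrite !Hv !normrM Halpha Hbeta mul1r mulr1.
have -> : alpha k * u k l' * beta l' * (alpha k' * u k' l * beta l)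
          = phase * (u k l' * u k' l) by rewrite /phase; ring.
have -> : alpha k * u k l * beta l * (alpha k' * u k' l' * beta l')
          = phase * (u k l * u k' l') by rewrite /phase; ring.
have phase_cancels (x y : C) : phase * x / (phase * y) = x / y.
  by rewrite invfM mulrACA divff // mul1r.
by rewrite phase_cancels.
Qed.

Lemma berezin_relabel (sigma : K -> K) (tau : L -> L) :
  injective sigma -> injective tau -> forall f,
  berezin (fun k l => u (sigma k) (tau l)) (fun k l => f (sigma k) (tau l))
  =2 (fun k l => berezin u f (sigma k) (tau l)).
Proof.
move=> sigma_inj tau_inj f k l; rewrite /berezin [RHS](reindex_inj sigma_inj).
by apply: eq_bigr => k' _; rewrite [RHS](reindex_inj tau_inj).
Qed.

End Berezin.

Theorem corollary3p3 (C : numClosedFieldType) (K L : finType) (n : nat)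
  (HK : #|K| = n) (HL : #|L| = n)
  (u : K -> L -> C) (Hu : unitary_mat u) (Hnz : forall k l, u k l != 0)
  (G : Type) (mul : G -> G -> G) (one : G) (inv : G -> G)
  (actK : G -> K -> K) (actL : G -> L -> L)
  (a : K -> G -> C) (b : L -> G -> C)
  (Hsym : symmetry_group u mul one inv actK actL a b) :
  forall (g : G) (f : K -> L -> C),
    berezin u (Rop inv actK actL g f) = Rop inv actK actL g (berezin u f).
Proof.
move=> g f.
have [Hgroup [HactK [HactL [[Ha _] [[Hb _] _]]]]] := Hsym.
have sigma_inj := can_inj (action_Kinv Hgroup HactK g).
have tau_inj := can_inj (action_Kinv Hgroup HactL g).
have beta_norm l : `|(b (actL (inv g) l) (inv g))^-1| = 1.
  by rewrite normfV Hb invr1.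
have alpha_norm k : `|a (actK (inv g) k) (inv g)| = 1 by exact: Ha.
apply: functional_extensionality => k; apply: functional_extensionality => l.
rewrite /Rop -(berezin_phase_invariant alpha_norm beta_norm
                 (symmetry_entry_phases Hsym (inv g))).
exact: berezin_relabel.
Qed.
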